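(* Let $G=(V,E)$ be a graph, $c\ge1$, $\epsilon\in[0,1/3)$, let $\kappa(G)=(V,\kappa(E))$ be an $(\epsilon,c)$-kernel of $G$ with tight nodes $\kappa_T(V)$, and let $M$ be a matching in $\kappa(G)$ such that every augmenting path in $\kappa(G)$ with respect to $M$ has length at least five. Let $F_T$ be the set of tight nodes unmatched in $M$. Then $|F_T|\le(1+3\epsilon)|M|$.
   Context: Let $\mathcal N_v$ denote the set of neighbors of $v$ in $G$. A subgraph $\kappa(G)=(V,\kappa(E))$ with $\kappa(E)\subseteq E$ is given, together with a partition of $V$ into tight nodes $\kappa_T(V)$ and slack nodes $\kappa_S(V)$. For $v\in V$ let $\kappa(\mathcal N_v)=\{u\in\mathcal N_v:(u,v)\in\kappa(E)\}$ (the friends of $v$). For $c\ge1$ and $\epsilon\in[0,1/3)$, $\kappa(G)$ is an $(\epsilon,c)$-kernel of $G$ (w.r.t. this partition) iff: (i) $|\kappa(\mathcal N_v)|\le(1+\epsilon)c$ for all $v\in V$; (ii) $|\kappa(\mathcal N_v)|\ge(1-\epsilon)c$ for all $v\in\kappa_T(V)$; (iii) for all $u,v\in\kappa_S(V)$, if $(u,v)\in E$ then $(u,v)\in\kappa(E)$. Given a matching $M$ in a graph $H$, an augmenting path of length $2k+1$ ($k \ge 0$) is a simple path in $H$ with $2k+1$ edges whose two end nodes are unmatched in $M$ and whose edges alternate between non-$M$ and $M$ edges (first and last edges not in $M$). *)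

From HB Require Import structures.
From mathcomp Require Import all_boot all_order all_algebra.
Set Implicit Arguments. Unset Strict Implicit. Unset Printing Implicit Defensive.
Import Order.TTheory GRing.Theory Num.Theory.
Local Open Scope ring_scope.

Definition simple_graph (V : finType) (E : rel V) : Prop :=
  symmetric E /\ irreflexive E.

Definition subgraph (V : finType) (E kE : rel V) : Prop :=
  symmetric kE /\ subrel kE E.

Definition friends (V : finType) (E kE : rel V) (v : V) : {set V} :=
  [set u | E u v && kE u v].

(* (eps,c)-kernel w.r.t. the partition V = T (tight) + ~:T (slack). *)
Definition is_kernel (R : realFieldType) (V : finType) (E kE : rel V)
    (T : {set V}) (eps c : R) : Prop :=
  subgraph E kE /\
  (forall v : V, (#|friends E kE v|%:R : R) <= (1 + eps) * c) /\
  (forall v : V, v \in T -> (1 - eps) * c <= (#|friends E kE v|%:R : R)) /\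
  (forall u v : V, u \notin T -> v \notin T -> E u v -> kE u v).

Definition is_matching (V : finType) (H : rel V) (M : {set {set V}}) : Prop :=
  (forall e, e \in M -> exists u v, [/\ u != v, H u v & e = [set u; v]]) /\
  (forall e1 e2, e1 \in M -> e2 \in M -> e1 != e2 -> [disjoint e1 & e2]).

Definition matched (V : finType) (M : {set {set V}}) (v : V) : bool :=
  [exists e in M, v \in e].

(* An augmenting path of length 2k+1 in H w.r.t. M, given as its sequence
   of 2k+2 vertices p = [v_0; ...; v_{2k+1}]: simple, consecutive vertices
   adjacent in H, edge i (v_i v_{i+1}) is in M iff i is odd (so the first
   and last edges are not in M), and both ends are unmatched. *)
Definition augmenting_path (V : finType) (H : rel V) (M : {set {set V}})
    (k : nat) (p : seq V) : Prop :=
  exists x : V,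
  [/\ size p = (2 * k + 2)%N,
      uniq p,
      (forall i, (i < 2 * k + 1)%N -> H (nth x p i) (nth x p i.+1)),
      (forall i, (i < 2 * k + 1)%N ->
          ([set nth x p i; nth x p i.+1] \in M) = odd i) &
      (~~ matched M (nth x p 0) /\ ~~ matched M (nth x p (2 * k + 1)))].

From HB Require Import structures.
From mathcomp Require Import all_boot all_order all_algebra.
From mathcomp Require Import lra.
Set Implicit Arguments. Unset Strict Implicit. Unset Printing Implicit Defensive.
Import Order.TTheory GRing.Theory Num.Theory.
Local Open Scope ring_scope.

(* A free tight node has at least (1 - eps) c friends, all matched since no
   augmenting path of length one exists.  The two ends a, b of a matching edge
   have at most (1 + eps) c free friends together: if both have one, these
   coincide (else they close an augmenting path of length three), so a and b
   have one free friend each, and a has at least the two friends x and b.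
   Double counting gives |F_T| (1 - eps) c <= |M| (1 + eps) c, and
   (1 + eps) / (1 - eps) <= 1 + 3 eps for eps <= 1/3. *)

Lemma double_counting (V : finType) (A : {set V}) (r : rel V) :
  (\sum_(v in A) #|[set u | r u v]| = \sum_u #|[set v in A | r u v]|)%N.
Proof.
transitivity (\sum_(v in A) \sum_u (r u v : nat))%N.
  by apply: eq_bigr => v _; rewrite -sum1_card big_mkcond /=;
     apply: eq_bigr => u _; rewrite inE; case: (r u v).
rewrite exchange_big /=; apply: eq_bigr => u _.
rewrite -sum1_card [RHS]big_mkcond /= [LHS]big_mkcond /=.
by apply: eq_bigr => v _; rewrite inE; case: (v \in A); case: (r u v).
Qed.

Section AugmentingPaths.
Variables (V : finType) (kE : rel V) (M : {set {set V}}).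

Lemma matched_mem e v : e \in M -> v \in e -> matched M v.
Proof. by move=> eM ve; apply/existsP; exists e; rewrite eM ve. Qed.

Lemma matchedE v : matched M v = (v \in cover M).
Proof.
by apply/existsP/bigcupP => [[e /andP[eM ve]] | [e eM ve]]; exists e; rewrite ?eM.
Qed.

Lemma augmenting_path1 u v :
  u != v -> kE u v -> ~~ matched M u -> ~~ matched M v ->
  augmenting_path kE M 0 [:: u; v].
Proof.
move=> uv huv mu mv; exists u; split => //=; first by rewrite inE andbT.
  by case.
case=> // _; apply/negbTE/negP => uvM.
by rewrite (matched_mem uvM (set21 u v)) in mu.
Qed.

Lemma augmenting_path3 x a b y :
  uniq [:: x; a; b; y] -> kE x a -> kE a b -> kE b y ->
  [set a; b] \in M -> ~~ matched M x -> ~~ matched M y ->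
  augmenting_path kE M 1 [:: x; a; b; y].
Proof.
move=> uniq_p hxa hab hby abM mx my; exists x; split => //.
  by case=> [|[|[|i]]].
case=> [|[|[|i]]] //= _; apply/negbTE/negP => eM.
  by rewrite (matched_mem eM (set21 x a)) in mx.
by rewrite (matched_mem eM (set22 b y)) in my.
Qed.

Hypothesis kE_irr : irreflexive kE.
Hypothesis no_short_augmenting :
  forall (k : nat) (p : seq V), augmenting_path kE M k p -> (5 <= 2 * k + 1)%N.

Lemma unmatched_nonadjacent u v :
  ~~ matched M u -> ~~ matched M v -> ~~ kE u v.
Proof.
move=> mu mv; apply/negP => huv.
have uv : u != v by apply: contraTneq huv => ->; rewrite kE_irr.
by have := no_short_augmenting (augmenting_path1 uv huv mu mv).
Qed.

Lemma unmatched_neighbours_eq x a b y :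
  [set a; b] \in M -> a != b -> kE x a -> kE a b -> kE b y ->
  ~~ matched M x -> ~~ matched M y -> x = y.
Proof.
move=> abM ab hxa hab hby mx my; apply/eqP/negPn/negP => xy.
have ma := matched_mem abM (set21 a b); have mb := matched_mem abM (set22 a b).
have uniq_p : uniq [:: x; a; b; y].
  have free_neq z w : ~~ matched M z -> matched M w -> z != w.
    by move=> mz mw; apply: contraNneq mz => ->.
  by rewrite /= !inE !negb_or xy ab ![_ == y]eq_sym !free_neq.
by have := no_short_augmenting (augmenting_path3 uniq_p hxa hab hby abM mx my).
Qed.

End AugmentingPaths.

Section FreeNeighbours.
Variables (V : finType) (kE : rel V) (M : {set {set V}}) (F : {set V}).
Hypothesis kE_sym : symmetric kE.
Hypothesis kE_irr : irreflexive kE.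
Hypothesis M_matching : is_matching kE M.
Hypothesis no_short_augmenting :
  forall (k : nat) (p : seq V), augmenting_path kE M k p -> (5 <= 2 * k + 1)%N.
Hypothesis F_unmatched : forall v, v \in F -> ~~ matched M v.

Local Notation deg v := #|[set u | kE u v]|.
Local Notation free_deg u := #|[set v in F | kE u v]|.

Lemma free_deg_unmatched u : ~~ matched M u -> free_deg u = 0%N.
Proof.
move=> mu; apply/eqP; rewrite cards_eq0; apply/eqP/setP => v; rewrite !inE.
apply/negbTE/andP => -[/F_unmatched mv].
exact/negP/(unmatched_nonadjacent kE_irr no_short_augmenting mu mv).
Qed.

Lemma free_deg_matched_edge a b :
  [set a; b] \in M -> a != b -> kE a b ->
  (free_deg a + free_deg b <= maxn (deg a) (deg b))%N.
Proof.
move=> abM ab hab.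
have free_deg_le u : (free_deg u <= deg u)%N.
  by apply/subset_leq_card/subsetP => v; rewrite !inE kE_sym => /andP[].
have [->|] := eqVneq (free_deg b) 0%N.
  by rewrite addn0 (leq_trans (free_deg_le a)) ?leq_maxl.
have [->|] := eqVneq (free_deg a) 0%N.
  by rewrite (leq_trans (free_deg_le b)) ?leq_maxr.
rewrite -!lt0n => /card_gt0P[x]; rewrite inE => /andP[xF hax].
move=> /card_gt0P[y]; rewrite inE => /andP[yF hby].
have same_neighbour v w : v \in F -> w \in F -> kE a v -> kE b w -> v = w.
  move=> vF wF hav hbw; rewrite kE_sym in hav.
  exact: (unmatched_neighbours_eq no_short_augmenting abM ab hav hab hbw
          (F_unmatched vF) (F_unmatched wF)).
have free_deg_a : (free_deg a <= 1)%N.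
  rewrite -(cards1 y) subset_leq_card //; apply/subsetP => v.
  by rewrite !inE => /andP[vF hav]; rewrite (same_neighbour v y).
have free_deg_b : (free_deg b <= 1)%N.
  rewrite -(cards1 x) subset_leq_card //; apply/subsetP => w.
  by rewrite !inE => /andP[wF hbw]; rewrite (same_neighbour x w).
have xb : x != b.
  by apply: contraNneq (F_unmatched xF) => ->; exact: matched_mem abM (set22 a b).
apply: leq_trans (leq_add free_deg_a free_deg_b) (leq_trans _ (leq_maxl _ _)).
apply: (@leq_trans #|[set x; b]|); first by rewrite cards2 xb.
apply/subset_leq_card/subsetP => v.
by rewrite !inE => /orP[] /eqP->; rewrite kE_sym.
Qed.

Lemma sum_free_deg_le :
  (\sum_(v in F) deg v <= \sum_(e in M) \max_(w in e) deg w)%N.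
Proof.
have [M_edge M_disj] := M_matching.
have M_triv : trivIset M by apply/trivIsetP; exact: M_disj.
rewrite double_counting (bigID (mem (cover M))) /=.
rewrite [X in (_ + X)%N]big1 ?addn0; last first.
  by move=> u uM; apply: free_deg_unmatched; rewrite matchedE.
rewrite big_trivIset //; apply: leq_sum => e eM.
have [a [b [ab hab e_ab]]] := M_edge e eM; rewrite e_ab in eM *.
rewrite big_setU1 ?inE // big_set1 big_setU1 ?inE // big_set1 /=.
exact: free_deg_matched_edge.
Qed.

End FreeNeighbours.

Lemma friendsE (V : finType) (E kE : rel V) v :
  subrel kE E -> friends E kE v = [set u | kE u v].
Proof.
by move=> kE_sub; apply/setP => u; rewrite !inE; apply/andb_idl/kE_sub.
Qed.

Lemma le_one_add3_mul (R : realFieldType) (eps f m : R) :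
  0 <= eps -> eps <= 1 / 3 -> 0 <= m ->
  f * (1 - eps) <= m * (1 + eps) -> f <= (1 + 3 * eps) * m.
Proof.
move=> eps0 eps3 m0 hfm.
have eps1 : 0 < 1 - eps by lra.
(* (1 + eps) <= (1 + 3 eps) (1 - eps) amounts to eps (1 - 3 eps) >= 0. *)
have slack : 0 <= m * eps * (1 - 3 * eps) by rewrite !mulr_ge0 //; lra.
by rewrite -(ler_pM2r eps1); lra.
Qed.

Theorem lemma3p14 (R : realFieldType) (V : finType) (E kE : rel V)
    (T : {set V}) (eps c : R) (M : {set {set V}}) :
  simple_graph E ->
  1 <= c -> 0 <= eps -> eps < 1 / 3 ->
  is_kernel E kE T eps c ->
  is_matching kE M ->
  (forall (k : nat) (p : seq V), augmenting_path kE M k p -> (5 <= 2 * k + 1)%N) ->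
  (#|[set v in T | ~~ matched M v]|%:R : R) <= (1 + 3 * eps) * (#|M|%:R).
Proof.
move=> [_ E_irr] c1 eps0 eps3 [kE_sub [deg_up [deg_low _]]] M_matching no_short.
have [kE_sym kE_subrel] := kE_sub.
have kE_irr : irreflexive kE.
  by move=> x; apply/negbTE/negP => /kE_subrel; rewrite E_irr.
set F := [set v in T | ~~ matched M v].
have F_unmatched v : v \in F -> ~~ matched M v by rewrite inE => /andP[].
set S := (\sum_(v in F) #|[set u | kE u v]|)%N.
have S_low : #|F|%:R * ((1 - eps) * c) <= S%:R.
  rewrite natr_sum mulr_natl -sumr_const; apply: ler_sum => v.
  by rewrite inE -(friendsE _ kE_subrel) => /andP[/deg_low].
have S_up : S%:R <= #|M|%:R * ((1 + eps) * c).
  apply: le_trans (_ : (\sum_(e in M) \max_(w in e) #|[set u | kE u w]|)%:R <= _).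
    rewrite ler_nat.
    exact: sum_free_deg_le kE_sym kE_irr M_matching no_short F_unmatched.
  rewrite natr_sum mulr_natl -sumr_const; apply: ler_sum => e eM.
  have [a [b [_ _ ->]]] := M_matching.1 e eM.
  have e_gt0 : (0 < #|[set a; b]|)%N by rewrite cards2.
  have [w _ ->] := eq_bigmax_cond (fun w => #|[set u | kE u w]|) e_gt0.
  by rewrite -(friendsE _ kE_subrel).
apply: le_one_add3_mul => //; first exact: ltW.
by rewrite -(ler_pM2r (lt_le_trans ltr01 c1)) -!mulrA (le_trans S_low S_up).
Qed.
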